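(* Let $n\ge2$, let $X\subset\mathbb{R}^n$ be finite with the Euclidean metric $d$, let $\epsilon>0$ and $A\subset X$. Then \[ B_\epsilon(A)\subset\bar A^{\mathfrak{m}}=\operatorname{int}(A)\cup(\partial A)^{\mathfrak{m}}. \]
   Context: $B_\epsilon(A)=\{p\in X: d(p,A)\le\epsilon\}$, where $d(p,A)=\inf_{a\in A}d(p,a)$. $\mathcal{Q}=\mathcal{Q}(\epsilon)$ is the collection of closed cubes $\{x\in\mathbb{R}^n: j_i\frac{\epsilon}{2\sqrt n}\le x_i\le (j_i+1)\frac{\epsilon}{2\sqrt n},\ i=1,\dots,n\}$, $j\in\mathbb{Z}^n$. For a cube $S\in\mathcal{Q}$ and integer $m\ge0$, $S^m=\{x\in\mathbb{R}^n:\max_i|x_i-s_i|\le m\frac{\epsilon}{2\sqrt n}\text{ for some }s\in S\}$. For $B\subset\mathbb{R}^n$, $\mathcal{I}(B)=\{S\in\mathcal{Q}: S\cap B\ne\emptyset\}$. A cube $S\in\mathcal{I}(A)$ is an interior cube of $A$ if $S^1\cap X\subset A$ and every cube $T\in\mathcal{Q}$ with $T\subset S^1$ lies in $\mathcal{I}(A)$; otherwise $S\in\mathcal{I}(A)$ is a boundary cube of $A$. $\operatorname{int}(A)$ is the union of the interior cubes, $\partial A$ the union of the boundary cubes, and $\bar A=\bigcup_{S\in\mathcal{I}(A)}S$. For $Y\subset\mathbb{R}^n$ and integer $N\ge0$, $Y^N=\bigcup_{S\in\mathcal{I}(Y)}S^N$. $\mathfrak{m}$ is the smallest integer with $\mathfrak{m}\ge2\sqrt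 n$. *)

From HB Require Import structures.
From mathcomp Require Import all_boot all_order all_algebra.
From mathcomp Require Import all_classical all_reals ereal.
Set Implicit Arguments. Unset Strict Implicit. Unset Printing Implicit Defensive.
Import Order.TTheory GRing.Theory Num.Theory.
Local Open Scope classical_set_scope.
Local Open Scope ring_scope.

Section Cubes.
Variables (R : realType) (n : nat).

Definition pt := 'I_n -> R.

Definition edist (x y : pt) : R := Num.sqrt (\sum_(i < n) (x i - y i) ^+ 2).

(* d(p,A) = inf_{a in A} d(p,a), as an extended real (+oo when A is empty) *)
Definition dist_set (p : pt) (A : set pt) : \bar R :=
  ereal_inf [set (edist p a)%:E | a in A].

Definition Bnbhd (X : set pt) (eps : R) (A : set pt) : set pt :=
  [set p | X p /\ (dist_set p A <= eps%:E)%E].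

Definition side (eps : R) : R := eps / (2 * Num.sqrt (n%:R)).

Definition cube (eps : R) (j : 'I_n -> int) : set pt :=
  [set x | forall i, (j i)%:~R * side eps <= x i <= (j i + 1)%:~R * side eps].

Definition cube_ext (eps : R) (m : nat) (j : 'I_n -> int) : set pt :=
  [set x | exists2 s, cube eps j s &
           forall i, `|x i - s i| <= m%:R * side eps].

Definition Icubes (eps : R) (B : set pt) : set ('I_n -> int) :=
  [set j | cube eps j `&` B !=set0].

Definition interior_cube (X : set pt) (eps : R) (A : set pt)
    (j : 'I_n -> int) : Prop :=
  Icubes eps A j /\ cube_ext eps 1 j `&` X `<=` A /\
  forall k, cube eps k `<=` cube_ext eps 1 j -> Icubes eps A k.

Definition boundary_cube (X : set pt) (eps : R) (A : set pt)
    (j : 'I_n -> int) : Prop :=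
  Icubes eps A j /\ ~ interior_cube X eps A j.

Definition cint (X : set pt) (eps : R) (A : set pt) : set pt :=
  \bigcup_(j in interior_cube X eps A) cube eps j.
Definition cbdry (X : set pt) (eps : R) (A : set pt) : set pt :=
  \bigcup_(j in boundary_cube X eps A) cube eps j.
Definition cclos (eps : R) (A : set pt) : set pt :=
  \bigcup_(j in Icubes eps A) cube eps j.

Definition cthick (eps : R) (Y : set pt) (N : nat) : set pt :=
  \bigcup_(j in Icubes eps Y) cube_ext eps N j.

(* frak m = smallest integer >= 2 sqrt n (nonnegative, so a nat) *)
Definition mfrak : nat := `|Num.ceil (2 * Num.sqrt (n%:R : R))|%N.

End Cubes.

From HB Require Import structures.
From mathcomp Require Import all_boot all_order all_algebra.
From mathcomp Require Import all_classical all_reals ereal.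
From mathcomp Require Import zify lra.
Import Order.TTheory GRing.Theory Num.Theory.
Set Implicit Arguments. Unset Strict Implicit. Unset Printing Implicit Defensive.
Local Open Scope classical_set_scope.
Local Open Scope ring_scope.

(* A point p of B_eps(A) is within eps of some a in A, the infimum over the
   finite set A being attained; as eps = 2 sqrt n * side <= m * side, every
   coordinate of p is within m sides of the cube containing a.
   For the equality, a cube T meeting bar A either is interior or meets
   partial A.  If T is interior, a point of T^m lies in a cube U whose index
   is within m of T's in every coordinate.  Walking from T to U by unit steps
   in each coordinate either stays among interior cubes, so U is interior, or
   first leaves them at a cube B adjacent to an interior cube; B then meets A,
   so it is a boundary cube, and U is still within m of B. *)

Lemma finite_ereal_inf_le (R : realType) (T : Type) (A : set T) (f : T -> R)
    (e : R) :
  finite_set A -> (ereal_inf [set (f a)%:E | a in A] <= e%:E)%E ->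
  exists2 a, A a & f a <= e.
Proof.
move=> /(finite_image f)/finite_seqP[r fAr] infe; apply: contrapT => noa.
have inr a : A a -> f a \in r.
  by move=> Aa; have : [set` r] (f a) by rewrite -fAr; exists a.
have gte y : y \in r -> e < y.
  move=> yr; have : [set` r] y by [].
  rewrite -fAr => -[a Aa <-]; rewrite ltNge; apply/negP => fae.
  by apply: noa; exists a.
pose d := \big[Order.min/e + 1]_(t <- r) t.
have led a : A a -> d <= f a by move/inr => far; exact: ge_bigmin_seq.
have ltd : e < d.
  rewrite /d big_seq; apply: (big_ind (fun y => e < y)) => [|y z|//].
  - by rewrite ltrDl.
  - by rewrite lt_min => -> ->.
have : (d%:E <= ereal_inf [set (f a)%:E | a in A])%E.
  by apply/ereal_infP => _ [a Aa <-]; rewrite lee_fin led.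
by move/le_trans/(_ infe); rewrite lee_fin leNgt ltd.
Qed.

Lemma coord_le_edist (R : realType) n (p a : pt R n) i :
  `|p i - a i| <= edist p a.
Proof.
rewrite /edist -sqrtr_sqr; apply: ler_wsqrtr.
by rewrite (bigD1 i) //= lerDl sumr_ge0 // => k _; exact: sqr_ge0.
Qed.

Lemma mfrak_ge (R : realType) n : 2 * Num.sqrt (n%:R : R) <= (mfrak R n)%:R.
Proof.
rewrite /mfrak [leRHS]pmulrn gez0_abs ?ceil_ge // ceil_ge0.
by have := sqrtr_ge0 (n%:R : R); lra.
Qed.

Section IndexBalls.
Variable n : nat.

Definition linf_ball (m : nat) (j : 'I_n -> int) : set ('I_n -> int) :=
  [set k | forall i, j i - m%:Z <= k i <= j i + m%:Z].

Lemma linf_ball_center m j : linf_ball m j j.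
Proof. by move=> i; lia. Qed.

Lemma linf_ball_first_exit (P : set ('I_n -> int)) (m : nat) (T U : 'I_n -> int) :
  P T -> linf_ball m T U ->
  P U \/ exists B, [/\ ~ P B, linf_ball m B U & exists2 C, P C & linf_ball 1 C B].
Proof.
elim: m T => [|m IHm] T PT TU.
  by left; have -> : U = T by apply: funext => i; have := TU i; lia.
pose T' i := T i + Num.sg (U i - T i).
have TT' : linf_ball 1 T T' by move=> i; rewrite /T'; case: sgzP; lia.
have T'U : linf_ball m T' U.
  by move=> i; have := TU i; rewrite /T'; case: sgzP; lia.
have [PT'|nPT'] := pselect (P T').
  case: (IHm T' PT' T'U) => [|[B [nPB BU CB]]]; first by left.
  by right; exists B; split => // i; have := BU i; lia.
by right; exists T'; split => [|i|]; [|have := T'U i; lia|exists T].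
Qed.

End IndexBalls.

Section CubeGeometry.
Variables (R : realType) (n : nat) (eps : R).
Hypothesis side_gt0 : 0 < side n eps.
Local Notation s := (side n eps).

Lemma eps_eq_side : eps = 2 * Num.sqrt (n%:R : R) * s.
Proof.
(* Were 2 sqrt n = 0, side would be the junk value eps / 0 = 0. *)
have : 2 * Num.sqrt (n%:R : R) != 0.
  by apply: contraTneq side_gt0; rewrite /side => ->; rewrite invr0 mulr0 ltxx.
by move=> nz; rewrite mulrC divfK.
Qed.

Lemma ler_side (a b : int) : (a%:~R * s <= b%:~R * s) = (a <= b).
Proof. by rewrite ler_pM2r // ler_int. Qed.

Lemma floor_cell (y : R) :
  (Num.floor (y / s))%:~R * s <= y < (Num.floor (y / s) + 1)%:~R * s.
Proof. by rewrite -ler_pdivlMr // -ltr_pdivrMr // floor_itv. Qed.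

Lemma cell_within (a b : int) (y : R) :
  a <= b -> a%:~R * s <= y <= (b + 1)%:~R * s ->
  exists2 k, a <= k <= b & k%:~R * s <= y <= (k + 1)%:~R * s.
Proof.
move=> leab /andP[ay yb]; set k := Num.floor (y / s).
have /andP[ky yk] := floor_cell y; rewrite -/k in ky yk.
have ak : a <= k.
  by have := le_lt_trans ay yk; rewrite ltr_pM2r // ltr_int; lia.
have [kb|bk] := lerP k b; first by exists k; [lia | rewrite ky ltW].
exists b; first lia.
by rewrite yb (le_trans _ ky) // ler_side ltW.
Qed.

Lemma cube_cover (x : pt R n) : exists j, cube eps j x.
Proof.
exists (fun i => Num.floor (x i / s)) => i.
by have /andP[-> /ltW ->] := floor_cell (x i).
Qed.

Lemma cube_nonempty (j : 'I_n -> int) : cube eps j !=set0.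
Proof. by exists (fun i => (j i)%:~R * s) => i; rewrite lexx ler_side lerDl. Qed.

Lemma cube_extP m (j : 'I_n -> int) (x : pt R n) : cube_ext eps m j x <->
  forall i, (j i - m%:Z)%:~R * s <= x i <= (j i + m%:Z + 1)%:~R * s.
Proof.
have ms : 0 <= m%:R * s by rewrite mulr_ge0 // ltW.
have lo i : (j i - m%:Z)%:~R * s = (j i)%:~R * s - m%:R * s.
  by rewrite intrB mulrBl.
have hi i : (j i + m%:Z + 1)%:~R * s = (j i + 1)%:~R * s + m%:R * s.
  by rewrite !intrD !mulrDl; lra.
split => [[y yj xy] i|xj].
  have /andP[y1 y2] := yj i; have := xy i; rewrite ler_norml lo hi => /andP[? ?].
  apply/andP; split; lra.
exists (fun i => if x i < (j i)%:~R * s then (j i)%:~R * s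
  else if (j i + 1)%:~R * s < x i then (j i + 1)%:~R * s else x i).
  move=> i; have /andP[? ?] := xj i; have ? : (j i)%:~R * s <= (j i + 1)%:~R * s.
    by rewrite ler_side lerDl.
  by case: ltP => ?; [|case: ltP => ?]; apply/andP; split; lra.
move=> i; have := xj i; rewrite lo hi ler_norml => /andP[? ?].
by case: ltP => ?; [|case: ltP => ?]; apply/andP; split; lra.
Qed.

Lemma cube_sub_cube_ext m (j k : 'I_n -> int) :
  linf_ball m j k -> cube eps k `<=` cube_ext eps m j.
Proof.
move=> jk x xk; apply/cube_extP => i.
have /andP[x1 x2] := xk i; have /andP[k1 k2] := jk i.
by rewrite (le_trans _ x1) ?(le_trans x2) // ler_side; lia.
Qed.

Lemma cube_meet_linf_ball (j k : 'I_n -> int) (x : pt R n) :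
  cube eps j x -> cube eps k x -> linf_ball 1 j k.
Proof.
move=> xj xk i; have /andP[j1 j2] := xj i; have /andP[k1 k2] := xk i.
have := le_trans j1 k2; have := le_trans k1 j2; rewrite !ler_side; lia.
Qed.

Lemma cube_ext_cover m (j : 'I_n -> int) (x : pt R n) :
  cube_ext eps m j x -> exists2 k, linf_ball m j k & cube eps k x.
Proof.
move=> /cube_extP xj.
have cell i : exists k : int, (j i - m%:Z <= k <= j i + m%:Z) /\
    k%:~R * s <= x i <= (k + 1)%:~R * s.
  by have [|k ? ?] := cell_within _ (xj i); [lia | exists k].
by have [k hk] := choice cell; exists k => i; case: (hk i).
Qed.

End CubeGeometry.

Section CubeSets.
Variables (R : realType) (n : nat) (X : set (pt R n)) (eps : R).
Hypothesis side_gt0 : 0 < side n eps.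

Lemma cthickS (Y Z : set (pt R n)) N :
  Y `<=` Z -> cthick eps Y N `<=` cthick eps Z N.
Proof. by move=> YZ x [j [y [jy /YZ Zy]] xj]; exists j => //; exists y. Qed.

Lemma sub_cthick (Y : set (pt R n)) N : Y `<=` cthick eps Y N.
Proof.
move=> y Yy; have [j yj] := cube_cover side_gt0 y.
by exists j; [exists y | exact: cube_sub_cube_ext (linf_ball_center N j) _ yj].
Qed.

Variable A : set (pt R n).

Lemma cint_sub_cclos : cint X eps A `<=` cclos eps A.
Proof. by move=> x [j [Aj _] xj]; exists j. Qed.

Lemma cbdry_sub_cclos : cbdry X eps A `<=` cclos eps A.
Proof. by move=> x [j [Aj _] xj]; exists j. Qed.

Lemma interior_cube_adj (C B : 'I_n -> int) :
  interior_cube X eps A C -> linf_ball 1 C B -> Icubes eps A B.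
Proof. by move=> [_ [_ CA]] CB; apply/CA/cube_sub_cube_ext. Qed.

Lemma boundary_cube_cbdry (B : 'I_n -> int) :
  boundary_cube X eps A B -> Icubes eps (cbdry X eps A) B.
Proof.
move=> bB; have [x xB] := cube_nonempty side_gt0 B.
by exists x; split => //; exists B.
Qed.

Lemma Icubes_cclos_cases (T : 'I_n -> int) : Icubes eps (cclos eps A) T ->
  interior_cube X eps A T \/ Icubes eps (cbdry X eps A) T.
Proof.
move=> [y [Ty [S AS Sy]]].
have [intS|nintS] := pselect (interior_cube X eps A S); last first.
  by right; exists y; split => //; exists S.
have AT := interior_cube_adj intS (cube_meet_linf_ball side_gt0 Sy Ty).
have [intT|nintT] := pselect (interior_cube X eps A T); first by left.
by right; apply: boundary_cube_cbdry.
Qed.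

Lemma interior_cube_ext_sub (T : 'I_n -> int) m : interior_cube X eps A T ->
  cube_ext eps m T `<=` cint X eps A `|` cthick eps (cbdry X eps A) m.
Proof.
move=> intT x /(cube_ext_cover side_gt0) [U TU xU].
have [intU|[B [nintB BU [C intC CB]]]] := linf_ball_first_exit intT TU.
  by left; exists U.
right; exists B; last exact: cube_sub_cube_ext BU _ xU.
by apply: boundary_cube_cbdry; split => //; exact: interior_cube_adj intC CB.
Qed.

Lemma cthick_cclos_eq m :
  cthick eps (cclos eps A) m = cint X eps A `|` cthick eps (cbdry X eps A) m.
Proof.
apply/seteqP; split => [x [T AT xT]|].
  have [intT|bT] := Icubes_cclos_cases AT; first exact: interior_cube_ext_sub xT.
  by right; exists T.
rewrite subUset; split; last exact: cthickS cbdry_sub_cclos.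
exact: subset_trans cint_sub_cclos (@sub_cthick (cclos eps A) m).
Qed.

Lemma Bnbhd_sub_cthick_cclos (m : nat) :
  finite_set A -> 2 * Num.sqrt (n%:R : R) <= m%:R ->
  Bnbhd X eps A `<=` cthick eps (cclos eps A) m.
Proof.
move=> finA sqrt_le_m p [_ /(finite_ereal_inf_le finA) [a Aa pa]].
have [U aU] := cube_cover side_gt0 a.
exists U; first by exists a; split => //; exists U => //; exists a.
exists a => // i; apply: le_trans (coord_le_edist p a i) _; apply: le_trans pa _.
by rewrite {1}(eps_eq_side side_gt0) ler_pM2r.
Qed.

End CubeSets.

Theorem corollary4p4 (R : realType) (n : nat) (X : set ('I_n -> R))
    (eps : R) (A : set ('I_n -> R)) :
  (2 <= n)%N -> finite_set X -> 0 < eps -> A `<=` X ->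
  Bnbhd X eps A `<=` cthick eps (cclos eps A) (mfrak R n) /\
  cthick eps (cclos eps A) (mfrak R n)
    = cint X eps A `|` cthick eps (cbdry X eps A) (mfrak R n).
Proof.
move=> n_ge2 finX eps_gt0 AX.
have side_gt0 : 0 < side n eps.
  by rewrite divr_gt0 // mulr_gt0 // sqrtr_gt0 ltr0n (leq_trans _ n_ge2).
split; last exact: cthick_cclos_eq.
exact: Bnbhd_sub_cthick_cclos (sub_finite_set AX finX) (mfrak_ge R n).
Qed.
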